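(* Suppose $\mathrm{char}(\mathbb{F})=0$. Then for every commutative unital $\mathbb{F}$-algebra $A$, $$\mathfrak{P}^{\mathrm{cu}}(A)=\ker\big(d:A\to\Omega^1(A)\big)=\mathcal{H}^0_{\mathrm{deR}}(A);$$ equivalently, for every affine scheme $S$ over $\mathbb{F}$, $\pi_0(S)=\mathcal{H}^0_{\mathrm{deR}}(S)$.
   Context: $\mathbb{F}$ is a field. For a commutative unital algebra $A$, $\mathfrak{P}^{\mathrm{cu}}(A)$ is the set of $a\in A$ such that for every commutative unital algebra $C$ and every unit-preserving morphism $\varphi:A\to C[x]$, $\varphi(a)$ is a constant polynomial (lies in $C\subseteq C[x]$); it is a unital subalgebra (the paper defines it via a universal pro-algebra $\mathfrak{M}^{\mathrm{cu}}_{A,\mathbb{F}[x]}$ and proves equality with this set). $d:A\to\Omega^1(A)$ is the universal derivation into the module of Kähler differentials of $A$ over $\mathbb{F}$, and $\mathcal{H}^0_{\mathrm{deR}}(A)$ is the degree-zero cohomology of the algebraic de Rham complex $\Omega(A)$, i.e. $\ker d$. For the affine scheme $S=\mathrm{Spec}(A)$, $\pi_0(S)$ denotes the affine scheme associated with $\mathfrak{P}^{\mathrm{cu}}(A)$ and $\mathcal{H}^0_{\mathrm{deR}}(S)=\mathcal{H}^0_{\mathrm{deR}}(A)$. *)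

From HB Require Import structures.
From mathcomp Require Import all_boot all_order all_algebra.
Set Implicit Arguments. Unset Strict Implicit. Unset Printing Implicit Defensive.
Import GRing.Theory.
Local Open Scope ring_scope.

Definition is_Falg_morph_to_poly (F : fieldType) (A C : comAlgType F)
    (phi : {rmorphism A -> {poly C}}) : Prop :=
  forall (k : F) (a : A), phi (k *: a) = (k *: (1 : C))%:P * phi a.

Definition Pcu (F : fieldType) (A : comAlgType F) (a : A) : Prop :=
  forall (C : comAlgType F) (phi : {rmorphism A -> {poly C}}),
    is_Falg_morph_to_poly phi -> exists c : C, phi a = c%:P.

Definition is_Fderivation (F : fieldType) (A : comAlgType F) (M : lmodType A)
    (D : A -> M) : Prop :=
  [/\ forall a b : A, D (a + b) = D a + D b,
      forall (k : F) (a : A), D (k *: a) = (k *: (1 : A)) *: D a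
    & forall a b : A, D (a * b) = a *: D b + b *: D a].

(* ker (d : A -> Omega^1(A)) = H^0_deR(A), described through the universal
   property of the universal derivation d: d a = 0 iff D a = 0 for every
   F-derivation D of A into any A-module. *)
Definition ker_d (F : fieldType) (A : comAlgType F) (a : A) : Prop :=
  forall (M : lmodType A) (D : A -> M), is_Fderivation D -> D a = 0.

(** Both inclusions come from one dictionary between F-derivations and
    F-algebra morphisms into polynomial rings.  An F-derivation [D : A -> M]
    is the same as the algebra morphism [a |-> a + D(a) x] into [(A ⊕ M)[x]],
    [A ⊕ M] the square-zero extension; so an [a] that every such morphism
    sends to a constant satisfies [D a = 0].  Conversely a morphism
    [phi : A -> C[x]] yields the derivation [a |-> (phi a)'] with values in
    [C[x]] viewed as an [A]-module through [phi]; if [d a = 0] then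
    [(phi a)' = 0], and in characteristic zero this forces [phi a] to be
    constant. *)

From HB Require Import structures.
From mathcomp Require Import all_boot all_order all_algebra.
Set Implicit Arguments. Unset Strict Implicit. Unset Printing Implicit Defensive.
Import GRing.Theory.
Local Open Scope ring_scope.

Section Derivation.
Variables (F : fieldType) (A : comAlgType F) (M : lmodType A) (D : A -> M).
Hypothesis hD : is_Fderivation D.

Lemma FderivationD a b : D (a + b) = D a + D b. Proof. by case: hD. Qed.

Lemma FderivationZ k a : D (k *: a) = (k *: (1 : A)) *: D a.
Proof. by case: hD. Qed.

Lemma FderivationM a b : D (a * b) = a *: D b + b *: D a.
Proof. by case: hD. Qed.

Lemma FderivationB a b : D (a - b) = D a - D b.
Proof. by apply/eqP; rewrite eq_sym subr_eq -FderivationD subrK. Qed.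

Lemma Fderivation1 : D 1 = 0.
Proof.
have := FderivationM 1 1; rewrite mulr1 !scale1r => h.
by apply: (addrI (D 1)); rewrite addr0 -h.
Qed.

End Derivation.

Section SquareZeroExtension.
Variables (F : fieldType) (A : comAlgType F) (M : lmodType A).

Definition sqz_ext : Type := (A * M)%type.
HB.instance Definition _ := GRing.Zmodule.on sqz_ext.

Definition sqz_mul (x y : sqz_ext) : sqz_ext := (x.1 * y.1, x.1 *: y.2 + y.1 *: x.2).

Definition sqz_one : sqz_ext := (1, 0).

Lemma sqz_mulA : associative sqz_mul.
Proof.
move=> [a m] [b n] [c p]; congr (_, _); first exact: mulrA.
by rewrite /= !scalerDr !scalerA addrA (mulrC c a) (mulrC c b).
Qed.

Lemma sqz_mulC : commutative sqz_mul.
Proof. by move=> [a m] [b n]; rewrite /sqz_mul /= mulrC addrC. Qed.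

Lemma sqz_mul1 : left_id sqz_one sqz_mul.
Proof. by move=> [a m]; rewrite /sqz_mul /= mul1r scale1r scaler0 addr0. Qed.

Lemma sqz_mulDl : left_distributive sqz_mul +%R.
Proof.
move=> [a m] [b n] [c p]; congr (_, _); first exact: mulrDl.
by rewrite /= scalerDl scalerDr addrACA.
Qed.

Lemma sqz_one_neq0 : sqz_one != 0.
Proof. by apply/negP => /eqP [] /eqP; rewrite oner_eq0. Qed.

HB.instance Definition _ := GRing.Zmodule_isComNzRing.Build sqz_ext
  sqz_mulA sqz_mulC sqz_mul1 sqz_mulDl sqz_one_neq0.

Definition sqz_scale (k : F) (x : sqz_ext) : sqz_ext :=
  (k *: x.1, (k *: (1 : A)) *: x.2).

Lemma sqz_scaleA a b v : sqz_scale a (sqz_scale b v) = sqz_scale (a * b) v.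
Proof.
case: v => [x m]; congr (_, _); first exact: scalerA.
by rewrite /= scalerA -scalerAl mul1r scalerA.
Qed.

Lemma sqz_scale1 : left_id 1 sqz_scale.
Proof. by case=> x m; rewrite /sqz_scale /= !scale1r. Qed.

Lemma sqz_scaleDr : right_distributive sqz_scale +%R.
Proof. by move=> a [x m] [y n]; rewrite /sqz_scale /= !scalerDr. Qed.

Lemma sqz_scaleDl v : {morph sqz_scale^~ v : a b / a + b}.
Proof. by case: v => x m a b; rewrite /sqz_scale /= !scalerDl. Qed.

HB.instance Definition _ := GRing.Zmodule_isLmodule.Build F sqz_ext
  sqz_scaleA sqz_scale1 sqz_scaleDr sqz_scaleDl.

Lemma sqz_scaleAl (k : F) (u v : sqz_ext) : k *: (u * v) = (k *: u) * v.
Proof.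
case: u v => [a m] [b n]; congr (_, _); first exact: scalerAl.
rewrite /= scalerDr !scalerA -scalerAl mul1r.
by rewrite [_ * b]mulrC.
Qed.

HB.instance Definition _ :=
  GRing.LSemiModule_isLSemiAlgebra.Build F sqz_ext sqz_scaleAl.
HB.instance Definition _ := GRing.Lalgebra_isComAlgebra.Build F sqz_ext.

Lemma sqz_oneE : (1 : sqz_ext) = (1, 0).
Proof. by []. Qed.

Lemma sqz_pairZ (k : F) (a : A) (m : M) :
  k *: ((a, m) : sqz_ext) = (k *: a, k%:A *: m).
Proof. by []. Qed.

Lemma sqz_pairM (a b : A) (m n : M) :
  ((a, m) : sqz_ext) * (b, n) = (a * b, a *: n + b *: m).
Proof. by []. Qed.

Lemma sqz_pairD (a b : A) (m n : M) :
  ((a, m) : sqz_ext) + (b, n) = (a + b, m + n).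
Proof. by []. Qed.

Lemma sqz_pairN (a : A) (m : M) : - ((a, m) : sqz_ext) = (- a, - m).
Proof. by []. Qed.

End SquareZeroExtension.

Section DerivationPoly.
Variables (F : fieldType) (A : comAlgType F) (M : lmodType A) (D : A -> M).
Hypothesis hD : is_Fderivation D.

Definition derivation_poly (a : A) : {poly sqz_ext M} :=
  ((a, 0) : sqz_ext M)%:P + ((0, D a) : sqz_ext M)%:P * 'X.

Lemma coef1_derivation_poly a : (derivation_poly a)`_1 = (0, D a).
Proof. by rewrite coefD coefC coefMX coefC add0r. Qed.

Lemma derivation_poly_is_zmod_morphism : zmod_morphism derivation_poly.
Proof.
move=> a b; rewrite /derivation_poly (FderivationB hD) opprD addrACA -mulNr.
by rewrite -mulrDl -!polyCN -!polyCD !sqz_pairN !sqz_pairD !subr0.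
Qed.

Lemma derivation_poly_is_monoid_morphism : monoid_morphism derivation_poly.
Proof.
split=> [|a b].
  by rewrite /derivation_poly (Fderivation1 hD) polyC0 mul0r addr0.
rewrite /derivation_poly mulrDr !mulrDl -!polyCM mulrA -polyCM mulrAC -polyCM.
rewrite mulrACA -polyCM.
have -> : ((0, D a) : sqz_ext M) * (0, D b) = 0.
  by rewrite sqz_pairM mul0r !scale0r addr0.
rewrite polyC0 mul0r addr0 -addrA -mulrDl -polyCD !sqz_pairM sqz_pairD.
rewrite (FderivationM hD) !scaler0 mul0r mulr0 !addr0 !add0r.
by rewrite (addrC (b *: _)).
Qed.

(* The hypothesis [hD] is carried by the name so that the morphism structure
   below can be inferred. *)
Definition derivation_rmorph of is_Fderivation D := derivation_poly.

HB.instance Definition _ := GRing.isZmodMorphism.Build A {poly sqz_ext M}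
  (derivation_rmorph hD) derivation_poly_is_zmod_morphism.
HB.instance Definition _ := GRing.isMonoidMorphism.Build A {poly sqz_ext M}
  (derivation_rmorph hD) derivation_poly_is_monoid_morphism.

Lemma derivation_rmorph_is_Falg_morph :
  is_Falg_morph_to_poly (derivation_rmorph hD : {rmorphism A -> _}).
Proof.
move=> k a; rewrite /= /derivation_rmorph /derivation_poly mulrDr mulrA -!polyCM.
rewrite (FderivationZ hD) sqz_oneE sqz_pairZ !sqz_pairM.
by rewrite !scaler0 mulr0 !addr0 mulr_algl.
Qed.

End DerivationPoly.

Lemma Pcu_ker_d (F : fieldType) (A : comAlgType F) (a : A) : Pcu a -> ker_d a.
Proof.
move=> Pa M D hD.
have [c Dac] := Pa _ _ (derivation_rmorph_is_Falg_morph hD).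
have := congr1 (fun p : {poly sqz_ext M} => p`_1) Dac.
by rewrite /= coef1_derivation_poly coefC => -[].
Qed.

Section RestrictScalars.
Variables (R S : pzRingType) (f : {rmorphism R -> S}).

Definition restrict_scalars of {rmorphism R -> S} : Type := S.
HB.instance Definition _ := GRing.Zmodule.on (restrict_scalars f).

Definition restrict_scale (r : R) (s : restrict_scalars f) : restrict_scalars f :=
  f r * (s : S).

Lemma restrict_scaleA a b v :
  restrict_scale a (restrict_scale b v) = restrict_scale (a * b) v.
Proof. by rewrite /restrict_scale rmorphM mulrA. Qed.

Lemma restrict_scale1 : left_id 1 restrict_scale.
Proof. by move=> v; rewrite /restrict_scale rmorph1 mul1r. Qed.

Lemma restrict_scaleDr : right_distributive restrict_scale +%R.
Proof. by move=> a u v; rewrite /restrict_scale mulrDr. Qed.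

Lemma restrict_scaleDl v : {morph restrict_scale^~ v : a b / a + b}.
Proof. by move=> a b; rewrite /restrict_scale rmorphD mulrDl. Qed.

HB.instance Definition _ := GRing.Zmodule_isLmodule.Build R (restrict_scalars f)
  restrict_scaleA restrict_scale1 restrict_scaleDr restrict_scaleDl.

End RestrictScalars.

Lemma deriv_is_Fderivation (F : fieldType) (A C : comAlgType F)
    (phi : {rmorphism A -> {poly C}}) :
  is_Falg_morph_to_poly phi ->
  is_Fderivation (fun a => (phi a)^`() : restrict_scalars phi).
Proof.
move=> phiZ; split=> [a b | k a | a b].
- by rewrite rmorphD derivD.
- by rewrite phiZ deriv_mulC [RHS]/GRing.scale /= /restrict_scale phiZ rmorph1 mulr1.
- by rewrite rmorphM derivM /GRing.scale /= /restrict_scale addrC (mulrC (phi b)).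
Qed.

Lemma deriv_eq0_polyC (F : fieldType) (C : lalgType F) (p : {poly C}) :
  [pchar F] =i pred0 -> p^`() = 0 -> p = (p`_0)%:P.
Proof.
move=> charF0 dp0; apply/polyP => -[|i]; rewrite coefC //=.
have iS_neq0 : (i.+1%:R : F) != 0 by rewrite ((pcharf0P F).1 charF0).
have := congr1 (fun q : {poly C} => q`_i) dp0.
rewrite coef_deriv coef0 -scaler_nat => /(congr1 ( *:%R (i.+1%:R : F)^-1)).
by rewrite scalerK // scaler0.
Qed.

Lemma ker_d_Pcu (F : fieldType) (A : comAlgType F) (a : A) :
  [pchar F] =i pred0 -> ker_d a -> Pcu a.
Proof.
move=> charF0 da0 C phi phiZ; exists (phi a)`_0.
exact/deriv_eq0_polyC/(da0 _ _ (deriv_is_Fderivation phiZ)).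
Qed.

Theorem mainTheorem13 (F : fieldType) (charF0 : [pchar F] =i pred0)
    (A : comAlgType F) :
  forall a : A, Pcu a <-> ker_d a.
Proof. by move=> a; split; [exact: Pcu_ker_d | exact: ker_d_Pcu]. Qed.
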